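(* The kernel of the Hopf algebra homomorphism $\varphi:\mathrm{WCQSym}\to\mathrm{QSym}$, defined by $\varphi(M_\alpha)=(-1)^{\ell_\varepsilon(\alpha)}M_{\bar\alpha}$ if $\alpha\in\mathcal C_N$ and $\varphi(M_\alpha)=0$ if $\alpha\in\mathcal C_\varepsilon$, is the ideal of $\mathrm{WCQSym}$ generated by the set $B_\varepsilon=\{M_\alpha:\alpha\in\mathcal C_\varepsilon\}$.
   Context: $\tilde{\mathbb N}=\mathbb N\cup\{\varepsilon\}$ with $0+\varepsilon=\varepsilon+\varepsilon=\varepsilon$ and $n+\varepsilon=n$ for integers $n\ge1$. $\mathbf{k}$ is a commutative ring containing $\mathbb Q$; $\mathbf{k}[[X]]_{\tilde{\mathbb N}}$, $X=\{x_1<x_2<\cdots\}$, is the algebra of possibly infinite linear combinations of formal monomials $\prod x_i^{f(x_i)}$ with $f$ finitely supported $\tilde{\mathbb N}$-valued, multiplied by adding exponents in $\tilde{\mathbb N}$. An $\tilde{\mathbb N}$-composition is a finite (possibly empty) sequence of elements of $\{\varepsilon,1,2,\dots\}$; $M_{(\alpha_1,\dots,\alpha_k)}=\sum_{1\le i_1<\cdots<i_k}x_{i_1}^{\alpha_1}\cdots x_{i_k}^{\alpha_k}$, $M_\emptyset=1$. $\mathrm{WCQSym}$ is the $\mathbf k$-span of all $M_\alpha$ (a Hopf algebra with deconcatenation coproduct $\Delta(M_{(\alpha_1,\dots,\alpha_k)})=\sum_{i=0}^kM_{(\alpha_1,\dots,\alpha_i)}\otimes M_{(\alpha_{i+1},\dots,\alpha_k)}$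 and counit $\epsilon(M_\alpha)=\delta_{\alpha,\emptyset}$), and $\mathrm{QSym}$ the Hopf subalgebra spanned by the $M_\alpha$ with all entries positive integers. $\ell_\varepsilon(\alpha)$ is the number of entries equal to $\varepsilon$, $\bar\alpha$ is $\alpha$ with its $\varepsilon$ entries deleted. $\mathcal C_\varepsilon$ is the set of $\tilde{\mathbb N}$-compositions with first entry $\varepsilon$, $\mathcal C_N$ the set of all others (including the empty one). *)

From HB Require Import structures.
From mathcomp Require Import all_boot all_order all_algebra.
Set Implicit Arguments. Unset Strict Implicit. Unset Printing Implicit Defensive.
Import GRing.Theory.
Local Open Scope ring_scope.

(* N~ = N u {eps}: None encodes eps, Some n encodes the integer n >= 0. *)
Definition ntilde := option nat.

Definition addnt (a b : ntilde) : ntilde :=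
  match a, b with
  | Some x, Some y => Some (x + y)%N
  | None, None => None
  | None, Some 0 => None
  | None, Some n => Some n
  | Some 0, None => None
  | Some n, None => Some n
  end.

Definition is_comp (al : seq ntilde) : bool := all (fun e => e != Some 0%N) al.

Definition in_Ceps (al : seq ntilde) : bool :=
  if al is e :: _ then e == None else false.

Definition leps (al : seq ntilde) : nat := count (pred1 None) al.
Definition bar (al : seq ntilde) : seq ntilde := filter (fun e => e != None) al.

(* Monomials prod_i x_{i+1}^{m_i} encoded as finite lists of exponents
   (m_0, m_1, ...) of x_1, x_2, ...; trailing zero exponents are irrelevant.
   Elements of k[[X]]_{N~} are coefficient functions on monomials. *)
Definition series (R : Type) := seq ntilde -> R.

Definition ntval (e : ntilde) : nat := if e is Some n then n else 0%N.
Definition cands (e : ntilde) : seq ntilde :=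
  None :: [seq Some i | i <- iota 0 (ntval e).+1].
Definition decomp_e (e : ntilde) : seq (ntilde * ntilde) :=
  [seq p <- [seq (a, b) | a <- cands e, b <- cands e] | addnt p.1 p.2 == e].

Fixpoint decomp (m : seq ntilde) : seq (seq ntilde * seq ntilde) :=
  if m is e :: m' then
    [seq (p.1 :: q.1, p.2 :: q.2) | p <- decomp_e e, q <- decomp m']
  else [:: ([::], [::])].

Definition mulser (R : comRingType) (F G : series R) : series R :=
  fun m => \sum_(p <- decomp m) F p.1 * G p.2.

(* the monomial quasisymmetric function M_alpha as a series: the coefficient
   of a monomial is 1 iff its nonzero exponents, read in variable order, form alpha *)
Definition Mser (R : comRingType) (al : seq ntilde) : series R :=
  fun m => if [seq e <- m | e != Some 0%N] == al then 1 else 0.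

Definition comb (R : Type) := seq (R * seq ntilde).
Definition is_comb (R : Type) (c : comb R) : bool := all (fun p => is_comp p.2) c.
Definition ser (R : comRingType) (c : comb R) : series R :=
  fun m => \sum_(p <- c) p.1 * Mser R p.2 m.

Definition phi (R : comRingType) (c : comb R) : comb R :=
  [seq (p.1 * (-1) ^+ leps p.2, bar p.2) | p <- c & ~~ in_Ceps p.2].

From HB Require Import structures.
From mathcomp Require Import all_boot all_order all_algebra.
From mathcomp Require Import ring.
From Stdlib Require Import FunctionalExtensionality.
Import GRing.Theory.
Local Open Scope ring_scope.

(* Write prepend a F for sum_i x_i^a F(x_(i+1), x_(i+2), ...), so that M_(a u) = prepend a M_u,
   and psi for the linear map M_alpha |-> (-1)^(l_eps alpha) M_(bar alpha) on all compositions,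
   so that phi is psi preceded by killing C_eps.  Products obey the quasi-shuffle recursion
     prepend a F * prepend b G = prepend a (F * prepend b G) + prepend b (prepend a F * G)
                                 + prepend (a + b) (F * G),
   and as a + eps = a it gives
     M_(a u) M_(eps v) = prepend a (M_u M_(eps v) + M_u M_v) + prepend eps (M_(a u) M_v).
   Since psi (M_(eps w)) = - psi (M_w), induction on u shows that psi kills
   M_u (M_(eps v) + M_v), hence phi kills M_u M_(eps v): phi vanishes on the ideal, once one
   knows that phi is well defined on series, i.e. that the M_alpha are linearly independent.
   Conversely, read modulo the ideal, the same identity gives M_(s eps w) = - M_(s w) for every
   nonempty s (by induction on the length of s); removing the eps entries one at a time then
   gives M_alpha = phi (M_alpha) modulo the ideal for every alpha, so c - phi c lies in the
   ideal. *)

Local Notation S0 := (Some 0%N).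

Lemma addnt0l b : addnt S0 b = b.
Proof. by case: b => [[|n]|]. Qed.

Lemma addnt0r a : addnt a S0 = a.
Proof. by case: a => [[|n]|] //=; rewrite addn0. Qed.

Lemma addnt_epsr a : a != S0 -> addnt a None = a.
Proof. by case: a => [[|n]|]. Qed.

Lemma addnt_neq0 a b : a != S0 -> b != S0 -> addnt a b != S0.
Proof. by case: a => [[|x]|]; case: b => [[|y]|]. Qed.

Lemma is_comp_cat (x y : seq ntilde) : is_comp (x ++ y) = is_comp x && is_comp y.
Proof. exact: all_cat. Qed.

Lemma cands_uniq e : uniq (cands e).
Proof.
rewrite /cands cons_uniq map_inj_uniq ?iota_uniq ?andbT; last by move=> x y [].
by apply/negP => /mapP [].
Qed.

Lemma mem_cands x y : (x \in cands (addnt x y)) && (y \in cands (addnt x y)).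
Proof.
have le_cands n k : (k <= n)%N -> Some k \in cands (Some n).
  by move=> le_kn; rewrite /cands inE mem_map ?mem_iota ?ltnS // => ? ? [].
have eps_cands e : None \in cands e by rewrite inE.
by case: x => [[|x]|]; case: y => [[|y]|]; rewrite /= ?eps_cands ?le_cands ?leq_addr ?leq_addl.
Qed.

Lemma mem_cands_0_self e : (S0 \in cands e) && (e \in cands e).
Proof. by have := mem_cands S0 e; rewrite addnt0l. Qed.

Section Series.
Local Set Implicit Arguments.
Local Unset Strict Implicit.
Variable R : comNzRingType.

Lemma sum_delta (T : eqType) (s : seq T) x0 (F : T -> R) :
  uniq s -> \sum_(x <- s) (x == x0)%:R * F x = (x0 \in s)%:R * F x0.
Proof.
elim: s => [|y s IH] /=; first by rewrite big_nil mul0r.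
case/andP=> y_notin_s uniq_s; rewrite big_cons IH // inE.
have [<-|_] := eqVneq y x0; last by rewrite mul0r add0r.
by rewrite (negbTE y_notin_s) mul0r addr0 mul1r.
Qed.

Lemma sum_decomp_e e (F : ntilde * ntilde -> R) :
  \sum_(pq <- decomp_e e) F pq =
  \sum_(x <- cands e) \sum_(y <- cands e) (addnt x y == e)%:R * F (x, y).
Proof.
rewrite /decomp_e big_filter big_mkcond big_allpairs_dep /=.
by apply: eq_bigr => x _; apply: eq_bigr => y _; case: eqP; rewrite ?mul1r ?mul0r.
Qed.

Lemma sum_decomp_e_delta e x y :
  \sum_(pq <- decomp_e e) (pq.1 == x)%:R * (pq.2 == y)%:R = (addnt x y == e)%:R :> R.
Proof.
rewrite sum_decomp_e.
transitivity (\sum_(x' <- cands e) (x' == x)%:R *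
                \sum_(y' <- cands e) (y' == y)%:R * (addnt x' y == e)%:R :> R).
  apply: eq_bigr => x' _; rewrite mulr_sumr; apply: eq_bigr => y' _ /=.
  by case: (x' =P x) => [->|_]; case: (y' =P y) => [->|_];
    rewrite ?mul1r ?mul0r ?mulr0 ?mulr1.
rewrite sum_delta ?cands_uniq // sum_delta ?cands_uniq //.
have [<-|_] := eqVneq (addnt x y) e; last by rewrite !mulr0.
by case/andP: (mem_cands x y) => -> ->; rewrite !mul1r.
Qed.

Lemma sum_decomp_e_fst0 e (f : ntilde -> R) :
  \sum_(pq <- decomp_e e) (pq.1 == S0)%:R * f pq.2 = f e.
Proof.
rewrite sum_decomp_e.
transitivity (\sum_(x <- cands e) (x == S0)%:R * \sum_(y <- cands e) (y == e)%:R * f y).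
  apply: eq_bigr => x _; rewrite mulr_sumr; apply: eq_bigr => y _ /=.
  by case: (x =P S0) => [->|_]; rewrite ?addnt0l ?eqxx ?mul1r ?mul0r ?mulr0.
by rewrite !sum_delta ?cands_uniq //; case/andP: (mem_cands_0_self e) => -> ->; rewrite !mul1r.
Qed.

Lemma sum_decomp_e_snd0 e (f : ntilde -> R) :
  \sum_(pq <- decomp_e e) (pq.2 == S0)%:R * f pq.1 = f e.
Proof.
rewrite sum_decomp_e exchange_big.
transitivity (\sum_(y <- cands e) (y == S0)%:R * \sum_(x <- cands e) (x == e)%:R * f x).
  apply: eq_bigr => y _; rewrite mulr_sumr; apply: eq_bigr => x _ /=.
  by case: (y =P S0) => [->|_]; rewrite ?addnt0r ?eqxx ?mul1r ?mul0r ?mulr0.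
by rewrite !sum_delta ?cands_uniq //; case/andP: (mem_cands_0_self e) => -> ->; rewrite !mul1r.
Qed.

(** * The series M_alpha and the quasi-shuffle recursion *)

Fixpoint prepend (a : ntilde) (H : series R) (m : seq ntilde) : R :=
  if m is e :: m' then (e == S0)%:R * prepend a H m' + (e == a)%:R * H m' else 0.

Lemma prepend0 a m : prepend a (fun _ => 0 : R) m = 0.
Proof. by elim: m => [|e m IH] //=; rewrite IH mulr0 add0r mulr0. Qed.

Lemma prepend_sum a (I : Type) (s : seq I) (k : I -> R) (F : I -> series R) m :
  prepend a (fun m => \sum_(i <- s) k i * F i m) m = \sum_(i <- s) k i * prepend a (F i) m.
Proof.
elim: m => [|e m IH] /=; first by rewrite big1 // => i _; rewrite mulr0.
by rewrite IH !mulr_sumr -big_split; apply: eq_bigr => i _ /=; ring.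
Qed.

Lemma prepend_scale a k (F : series R) m :
  prepend a (fun m => k * F m) m = k * prepend a F m.
Proof. by elim: m => [|e m IH] /=; rewrite ?mulr0 // IH; ring. Qed.

Lemma mulser_cons (F G : series R) e m :
  mulser F G (e :: m) = \sum_(pq <- decomp_e e) \sum_(r <- decomp m)
     F (pq.1 :: r.1) * G (pq.2 :: r.2).
Proof. by rewrite /mulser /= big_allpairs_dep. Qed.

Lemma Mser_nil_cons e w : Mser R [::] (e :: w) = (e == S0)%:R * Mser R [::] w.
Proof.
by rewrite /Mser /=; case: (e =P S0) => [->|/eqP e_neq0]; rewrite ?mul1r ?e_neq0 ?mul0r.
Qed.

Lemma mulser1l (G : series R) m : mulser (Mser R [::]) G m = G m.
Proof.
elim: m G => [|e m IH] G; first by rewrite /mulser big_seq1 /Mser mul1r.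
transitivity (mulser (Mser R [::]) (fun w => G (e :: w)) m); last exact: IH.
rewrite mulser_cons /mulser.
rewrite -(sum_decomp_e_fst0 e (fun y => \sum_(r <- decomp m) Mser R [::] r.1 * G (y :: r.2))).
apply: eq_bigr => pq _; rewrite mulr_sumr; apply: eq_bigr => r _.
by rewrite Mser_nil_cons -mulrA.
Qed.

Lemma mulser1r (F : series R) m : mulser F (Mser R [::]) m = F m.
Proof.
elim: m F => [|e m IH] F; first by rewrite /mulser big_seq1 /Mser mulr1.
transitivity (mulser (fun w => F (e :: w)) (Mser R [::]) m); last exact: IH.
rewrite mulser_cons /mulser.
rewrite -(sum_decomp_e_snd0 e (fun y => \sum_(r <- decomp m) F (y :: r.1) * Mser R [::] r.2)).
apply: eq_bigr => pq _; rewrite mulr_sumr; apply: eq_bigr => r _.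
by rewrite Mser_nil_cons mulrCA.
Qed.

Lemma Mser_cons a w : a != S0 -> Mser R (a :: w) = prepend a (Mser R w).
Proof.
move=> a_neq0; apply: functional_extensionality; elim=> [|e m IH] //=.
rewrite -IH /Mser /=; have [->|e_neq0] := eqVneq e S0.
  by rewrite (eq_sym S0) (negbTE a_neq0) mul0r addr0 mul1r.
by rewrite mul0r add0r eqseq_cons; case: (e == a); rewrite ?mul1r ?mul0r.
Qed.

Lemma mulser_prepend a b (F G : series R) m :
  mulser (prepend a F) (prepend b G) m =
  prepend a (mulser F (prepend b G)) m + prepend b (mulser (prepend a F) G) m
  + prepend (addnt a b) (mulser F G) m.
Proof.
elim: m => [|e m IH]; first by rewrite /mulser big_seq1 /= mulr0 !addr0.
have split_first (pq : ntilde * ntilde) :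
  \sum_(r <- decomp m) prepend a F (pq.1 :: r.1) * prepend b G (pq.2 :: r.2) =
    (pq.1 == S0)%:R * (pq.2 == S0)%:R * mulser (prepend a F) (prepend b G) m
  + (pq.1 == S0)%:R * (pq.2 == b)%:R * mulser (prepend a F) G m
  + (pq.1 == a)%:R * (pq.2 == S0)%:R * mulser F (prepend b G) m
  + (pq.1 == a)%:R * (pq.2 == b)%:R * mulser F G m.
  by rewrite /mulser !mulr_sumr -!big_split; apply: eq_bigr => r _ /=; ring.
rewrite mulser_cons (eq_bigr _ (fun pq _ => split_first pq)) !big_split /=.
rewrite -!mulr_suml !sum_decomp_e_delta !addnt0l !addnt0r IH /= !(eq_sym _ e); ring.
Qed.

Definition linext (f : seq ntilde -> series R) (c : comb R) : series R :=
  fun m => \sum_(p <- c) p.1 * f p.2 m.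

Lemma ser_linext c : ser c = linext (Mser R) c.
Proof. by []. Qed.

Lemma eq_linext f g c : (forall w m, f w m = g w m) -> linext f c = linext g c.
Proof.
by move=> eq_fg; apply: functional_extensionality => m; apply: eq_bigr => p _; rewrite eq_fg.
Qed.

Lemma linext_cat f x y m : linext f (x ++ y) m = linext f x m + linext f y m.
Proof. exact: big_cat. Qed.

Lemma linextD f g c m :
  linext (fun w m => f w m + g w m) c m = linext f c m + linext g c m.
Proof. by rewrite /linext -big_split; apply: eq_bigr => p _; rewrite mulrDr. Qed.

Lemma linextN f c m : linext (fun w m => - f w m) c m = - linext f c m.
Proof. by rewrite /linext /= -sumrN; apply: eq_bigr => p _; rewrite mulrN. Qed.

Lemma linext_eq0 f c m : (forall w, f w m = 0) -> linext f c m = 0.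
Proof. by move=> f0; rewrite /linext big1 // => p _; rewrite f0 mulr0. Qed.

Definition pfx (a : ntilde) (x : comb R) : comb R := [seq (p.1, a :: p.2) | p <- x].

Lemma linext_pfx f a x : linext f (pfx a x) = linext (fun w => f (a :: w)) x.
Proof. by apply: functional_extensionality => m; rewrite /linext big_map. Qed.

Definition scalec (k : R) (x : comb R) : comb R := [seq (k * p.1, p.2) | p <- x].

Lemma linext_scale f k x m : linext f (scalec k x) m = k * linext f x m.
Proof.
by rewrite /linext big_map mulr_sumr; apply: eq_bigr => p _; rewrite mulrA.
Qed.

Lemma linext_flatten f xs m :
  linext f (flatten xs) m = \sum_(x <- xs) linext f x m.
Proof. exact: big_flatten. Qed.

Lemma prepend_linext a f c m :
  prepend a (linext f c) m = linext (fun w => prepend a (f w)) c m.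
Proof. exact: prepend_sum. Qed.

Lemma mulser_linextl f c (G : series R) m :
  mulser (linext f c) G m = linext (fun w => mulser (f w) G) c m.
Proof.
rewrite /mulser /linext; under eq_bigr => r _ do rewrite mulr_suml.
rewrite exchange_big; apply: eq_bigr => p _; rewrite mulr_sumr.
by apply: eq_bigr => r _; rewrite mulrA.
Qed.

Lemma mulser_scalel k (F G : series R) m :
  mulser (fun m => k * F m) G m = k * mulser F G m.
Proof. by rewrite /mulser mulr_sumr; apply: eq_bigr => r _; rewrite mulrA. Qed.

Lemma ser_pfx a x : a != S0 -> ser (pfx a x) = prepend a (ser x).
Proof.
move=> a_neq0; apply: functional_extensionality => m.
by rewrite ser_linext linext_pfx prepend_linext; apply: eq_bigr => p _; rewrite Mser_cons.
Qed.

Lemma is_comb_cat (x y : comb R) : is_comb (x ++ y) = is_comb x && is_comb y.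
Proof. exact: all_cat. Qed.

Lemma is_comb_pfx a x : a != S0 -> is_comb x -> is_comb (pfx a x).
Proof.
by move=> a_neq0; rewrite /is_comb all_map; apply: sub_all => p /= ->; rewrite andbT.
Qed.

Lemma is_comb_scale k x : is_comb (scalec k x) = is_comb x.
Proof. by rewrite /is_comb all_map. Qed.

Lemma is_comb_flatten (xs : seq (comb R)) : all (@is_comb R) xs -> is_comb (flatten xs).
Proof. by elim: xs => //= x xs IH /andP [comb_x /IH]; rewrite is_comb_cat comb_x. Qed.

Fixpoint qshuffle (u v : seq ntilde) : comb R :=
  if u is a :: u' then
    let fix qshuffle_u v := if v is b :: v' then
        pfx a (qshuffle u' v) ++ pfx b (qshuffle_u v') ++ pfx (addnt a b) (qshuffle u' v')
      else [:: (1, u)]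
    in qshuffle_u v
  else [:: (1, v)].

Lemma qshuffle_cons a u b v : qshuffle (a :: u) (b :: v) =
  pfx a (qshuffle u (b :: v)) ++ pfx b (qshuffle (a :: u) v)
  ++ pfx (addnt a b) (qshuffle u v).
Proof. by []. Qed.

Lemma qshuffles0 u : qshuffle u [::] = [:: (1, u)].
Proof. by case: u. Qed.

Lemma is_comb_qshuffle u v : is_comp u -> is_comp v -> is_comb (qshuffle u v).
Proof.
elim: u v => [|a u IHu] v comp_u; first by rewrite /is_comb /= andbT.
elim: v => [|b v IHv] comp_v; first by rewrite qshuffles0 /is_comb /= andbT.
case/andP: comp_u comp_v => a_neq0 comp_u /andP [b_neq0 comp_v].
by rewrite qshuffle_cons !is_comb_cat !is_comb_pfx ?addnt_neq0 ?IHu ?IHv //= ?a_neq0 ?b_neq0.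
Qed.

Lemma ser_qshuffle u v : is_comp u -> is_comp v ->
  ser (qshuffle u v) = mulser (Mser R u) (Mser R v).
Proof.
elim: u v => [|a u IHu] v comp_u.
  by move=> _; apply: functional_extensionality => m; rewrite mulser1l /ser big_seq1 mul1r.
elim: v => [|b v IHv] comp_v.
  by apply: functional_extensionality => m; rewrite mulser1r qshuffles0 /ser big_seq1 mul1r.
have [a_neq0 comp_u'] := andP comp_u; have [b_neq0 comp_v'] := andP comp_v.
apply: functional_extensionality => m.
rewrite qshuffle_cons !ser_linext !linext_cat -!ser_linext !ser_pfx ?addnt_neq0 //.
rewrite IHu // IHv // IHu // (Mser_cons _ a_neq0) (Mser_cons _ b_neq0) mulser_prepend.
by rewrite -(Mser_cons _ a_neq0) -(Mser_cons _ b_neq0) addrA.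
Qed.

Lemma Mser_comp w al : is_comp al -> Mser R w al = (w == al)%:R.
Proof. by move=> /all_filterP comp_al; rewrite /Mser comp_al eq_sym; case: eqP. Qed.

Lemma sum_comb_coef (f : seq ntilde -> R) c (U : seq (seq ntilde)) :
  uniq U -> all is_comp U -> {subset [seq p.2 | p <- c] <= U} ->
  \sum_(p <- c) p.1 * f p.2 = \sum_(al <- U) f al * ser c al.
Proof.
move=> uniq_U comp_U sub_U.
transitivity (\sum_(p <- c) \sum_(al <- U) (al == p.2)%:R * (p.1 * f al)).
  by apply: eq_big_seq => p p_c; rewrite sum_delta // sub_U ?map_f // mul1r.
rewrite exchange_big; apply: eq_big_seq => al al_U.
rewrite /ser mulr_sumr; apply: eq_bigr => p _.
by rewrite Mser_comp ?(allP comp_U) // eq_sym; ring.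
Qed.

Lemma comb_sum_congr (f : seq ntilde -> R) c d :
  is_comb c -> is_comb d -> (forall m, ser c m = ser d m) ->
  \sum_(p <- c) p.1 * f p.2 = \sum_(p <- d) p.1 * f p.2.
Proof.
move=> comb_c comb_d eq_cd; set U := undup [seq p.2 | p <- c ++ d].
have comp_U : all is_comp U.
  by apply/allP => al; rewrite mem_undup map_cat mem_cat => /orP [] /mapP [p p_cd ->];
    [exact: (allP comb_c) | exact: (allP comb_d)].
rewrite (@sum_comb_coef _ _ U) ?undup_uniq // => [|al al_c]; last first.
  by rewrite mem_undup map_cat mem_cat al_c.
rewrite (@sum_comb_coef _ _ U) ?undup_uniq // => [|al al_d]; last first.
  by rewrite mem_undup map_cat mem_cat al_d orbT.
by apply: eq_bigr => al _; rewrite eq_cd.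
Qed.

Definition psiM (w : seq ntilde) : series R := fun m => (-1) ^+ leps w * Mser R (bar w) m.

Definition phiM (w : seq ntilde) : series R := if in_Ceps w then fun _ => 0 else psiM w.

Lemma phi_cons (p : R * seq ntilde) (c : comb R) : phi (p :: c) =
  if in_Ceps p.2 then phi c else (p.1 * (-1) ^+ leps p.2, bar p.2) :: phi c.
Proof. by rewrite /phi /=; case: (in_Ceps p.2). Qed.

Lemma ser_phi c : ser (phi c) = linext phiM c.
Proof.
apply: functional_extensionality => m.
elim: c => [|p c IH]; first by rewrite /ser /linext !big_nil.
rewrite phi_cons /linext big_cons -/(linext phiM c m) -IH /phiM.
case: (in_Ceps p.2) => /=; first by rewrite mulr0 add0r.
by rewrite /ser big_cons /psiM mulrA.
Qed.

Lemma psiM_eps w m : psiM (None :: w) m = - psiM w m.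
Proof. by rewrite /psiM /leps /bar /= exprS mulN1r mulNr. Qed.

Lemma psiM_cons a w : a != S0 -> a != None -> psiM (a :: w) = prepend a (psiM w).
Proof.
move=> a_neq0 a_neq_eps; apply: functional_extensionality => m.
rewrite /psiM /leps /bar /= (negbTE a_neq_eps) /= add0n Mser_cons //.
by rewrite -prepend_scale.
Qed.

Lemma phiM_cons a w : a != None -> phiM (a :: w) = psiM (a :: w).
Proof. by rewrite /phiM /=; case: eqP. Qed.

(** * The ideal lies in the kernel *)

Definition qshuffle_opt_eps (u v : seq ntilde) : comb R :=
  qshuffle u (None :: v) ++ qshuffle u v.

Lemma linext_qshuffle_eps f a u v m : a != S0 ->
  linext f (qshuffle (a :: u) (None :: v)) m =
  linext (fun w => f (a :: w)) (qshuffle_opt_eps u v) m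
  + linext (fun w => f (None :: w)) (qshuffle (a :: u) v) m.
Proof.
by move=> a_neq0; rewrite qshuffle_cons addnt_epsr // !linext_cat !linext_pfx; ring.
Qed.

Lemma linext_qshuffle_opt_eps f a u v m : a != S0 ->
  linext f (qshuffle_opt_eps (a :: u) v) m =
  linext (fun w => f (a :: w)) (qshuffle_opt_eps u v) m
  + linext (fun w m => f (None :: w) m + f w m) (qshuffle (a :: u) v) m.
Proof.
by move=> a_neq0; rewrite [LHS]linext_cat linext_qshuffle_eps // linextD addrA.
Qed.

Lemma linext_psiM_qshuffle_opt_eps u v m :
  is_comp u -> linext psiM (qshuffle_opt_eps u v) m = 0.
Proof.
elim: u m => [|a u IH] m.
  by move=> _; rewrite /linext big_cons big_seq1 psiM_eps !mul1r addNr.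
case/andP => a_neq0 comp_u; rewrite linext_qshuffle_opt_eps //.
rewrite [X in _ + X]linext_eq0 => [|w]; last by rewrite psiM_eps addNr.
have [-> | a_neq_eps] := eqVneq a None.
  rewrite addr0 (eq_linext (g := fun w m => - psiM w m)) => [|w m']; last exact: psiM_eps.
  by rewrite linextN IH ?oppr0.
rewrite (eq_linext (g := fun w => prepend a (psiM w))) => [|w m']; last by rewrite psiM_cons.
rewrite -prepend_linext (_ : linext psiM _ = fun _ => 0) ?prepend0 ?addr0 //.
by apply: functional_extensionality => m'; apply: IH.
Qed.

Lemma linext_phiM_qshuffle_eps u v m : is_comp u -> linext phiM (qshuffle u (None :: v)) m = 0.
Proof.
case: u => [|a u]; first by rewrite /linext big_seq1 mulr0.
case/andP => a_neq0 comp_u; rewrite linext_qshuffle_eps // [X in _ + X]linext_eq0 // addr0.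
have [-> | a_neq_eps] := eqVneq a None; first exact: linext_eq0.
rewrite (eq_linext (g := fun w => prepend a (psiM w))) => [|w m']; last first.
  by rewrite phiM_cons // psiM_cons.
rewrite -prepend_linext (_ : linext psiM _ = fun _ => 0) ?prepend0 //.
by apply: functional_extensionality => m'; apply: linext_psiM_qshuffle_opt_eps.
Qed.

Definition comb_mulM (x : comb R) (w : seq ntilde) : comb R :=
  flatten [seq scalec p.1 (qshuffle p.2 w) | p <- x].

Lemma is_comb_comb_mulM x w : is_comb x -> is_comp w -> is_comb (comb_mulM x w).
Proof.
move=> comb_x comp_w; apply: is_comb_flatten; rewrite all_map.
by apply: sub_all comb_x => p comp_p /=; rewrite is_comb_scale is_comb_qshuffle.
Qed.

Lemma ser_comb_mulM x w m : is_comb x -> is_comp w ->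
  ser (comb_mulM x w) m = mulser (ser x) (Mser R w) m.
Proof.
move=> comb_x comp_w; rewrite ser_linext linext_flatten big_map mulser_linextl.
apply: eq_big_seq => p p_x; rewrite linext_scale -ser_linext ser_qshuffle //.
exact: (allP comb_x).
Qed.

Lemma linext_phiM_comb_mulM x v m : is_comb x -> linext phiM (comb_mulM x (None :: v)) m = 0.
Proof.
move=> comb_x; rewrite linext_flatten big_map big_seq big1 // => p p_x.
by rewrite linext_scale linext_phiM_qshuffle_eps ?mulr0 // (allP comb_x).
Qed.

Definition eps_gen (q : comb R * seq ntilde) : bool :=
  is_comb q.1 && is_comp q.2 && in_Ceps q.2.

Lemma phi_vanishes_on_ideal c gs : is_comb c -> all eps_gen gs ->
    (forall m, ser c m = \sum_(q <- gs) mulser (ser q.1) (Mser R q.2) m) ->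
  forall m, ser (phi c) m = 0.
Proof.
move=> comb_c gens_gs ser_c m.
set d := flatten [seq comb_mulM q.1 q.2 | q <- gs].
have comb_d : is_comb d.
  apply: is_comb_flatten; rewrite all_map; apply: sub_all gens_gs.
  by move=> q /andP [/andP [comb_q comp_q] _]; apply: is_comb_comb_mulM.
have ser_cd m' : ser c m' = ser d m'.
  rewrite ser_c ser_linext linext_flatten big_map; apply: eq_big_seq => q q_gs.
  have /andP [/andP [comb_q comp_q] _] := allP gens_gs q q_gs.
  by rewrite -ser_linext ser_comb_mulM.
rewrite ser_phi /linext (comb_sum_congr (fun w => phiM w m) comb_c comb_d ser_cd).
rewrite -/(linext phiM d m) linext_flatten big_map big_seq big1 // => -[x [|e v]] q_gs.
  by have /andP [_ ] := allP gens_gs _ q_gs.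
have /andP [/andP [comb_x _] /eqP /= ->] := allP gens_gs _ q_gs.
exact: linext_phiM_comb_mulM.
Qed.

(** * The kernel lies in the ideal *)

Definition in_ideal (F : series R) : Prop :=
  exists gs, all eps_gen gs /\
    forall m, F m = \sum_(q <- gs) mulser (ser q.1) (Mser R q.2) m.

Lemma in_ideal_ext {F G : series R} : in_ideal F -> (forall m, F m = G m) -> in_ideal G.
Proof. by move=> [gs [gens_gs ser_F]] eq_FG; exists gs; split => // m; rewrite -eq_FG. Qed.

Lemma in_ideal0 : in_ideal (fun _ => 0).
Proof. by exists [::]; split => // m; rewrite big_nil. Qed.

Lemma in_idealD F G : in_ideal F -> in_ideal G -> in_ideal (fun m => F m + G m).
Proof.
move=> [gsF [gensF serF]] [gsG [gensG serG]]; exists (gsF ++ gsG).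
by rewrite all_cat gensF gensG; split => // m; rewrite big_cat serF serG.
Qed.

Lemma in_idealZ k F : in_ideal F -> in_ideal (fun m => k * F m).
Proof.
move=> [gs [gens_gs ser_F]]; exists [seq (scalec k q.1, q.2) | q <- gs]; split.
  by rewrite all_map; apply: sub_all gens_gs => q; rewrite /eps_gen /= is_comb_scale.
move=> m; rewrite ser_F big_map mulr_sumr; apply: eq_bigr => q _ /=.
have -> : ser (scalec k q.1) = fun m => k * ser q.1 m.
  by apply: functional_extensionality => m'; rewrite ser_linext linext_scale.
by rewrite mulser_scalel.
Qed.

Lemma in_idealB F G : in_ideal F -> in_ideal G -> in_ideal (fun m => F m - G m).
Proof.
move=> idF /(in_idealZ (-1)) idG.
by apply: (in_ideal_ext (in_idealD idF idG)) => m; rewrite mulN1r.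
Qed.

Lemma in_ideal_linext f c : (forall p, p \in c -> in_ideal (f p.2)) -> in_ideal (linext f c).
Proof.
elim: c => [|p c IH] id_f.
  by apply: (in_ideal_ext in_ideal0) => m; rewrite /linext big_nil.
have id_p := in_idealZ p.1 (id_f p (mem_head _ _)).
have id_c : in_ideal (linext f c) by apply: IH => q q_c; apply: id_f; rewrite inE q_c orbT.
by apply: (in_ideal_ext (in_idealD id_p id_c)) => m; rewrite /linext big_cons.
Qed.

Lemma in_ideal_mulM s w : is_comp s -> is_comp w -> in_Ceps w ->
  in_ideal (mulser (Mser R s) (Mser R w)).
Proof.
move=> comp_s comp_w eps_w; exists [:: ([:: (1, s)], w)].
split; first by rewrite /= /eps_gen /= /is_comb /= comp_s comp_w eps_w.
move=> m; rewrite big_seq1 /=.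
have -> : ser [:: (1, s)] = Mser R s.
  by apply: functional_extensionality => m'; rewrite /ser big_seq1 mul1r.
by [].
Qed.

Lemma in_ideal_M w : is_comp w -> in_Ceps w -> in_ideal (Mser R w).
Proof.
move=> comp_w eps_w; apply: (in_ideal_ext (in_ideal_mulM (s := [::]) isT comp_w eps_w)) => m.
exact: mulser1l.
Qed.

Definition eps_negating (r : seq ntilde) : Prop :=
  forall w, is_comp w -> in_ideal (fun m => Mser R (r ++ None :: w) m + Mser R (r ++ w) m).

(* Each unfolding of the quasi-shuffle recursion moves one letter of s into the prefix r and
   leaves terms M_(r eps w) + M_(r w), which vanish modulo the ideal by hypothesis. *)
Lemma prefix_qshuffle_opt_eps v s r : is_comp v -> is_comp s -> is_comp r -> r != [::] ->
    (forall t, is_comp t -> (0 < size t < size r + size s)%N -> eps_negating t) ->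
  in_ideal (fun m => linext (fun w => Mser R (r ++ w)) (qshuffle_opt_eps s v) m
                     - (Mser R (r ++ s ++ None :: v) m + Mser R (r ++ s ++ v) m)).
Proof.
move=> comp_v; elim: s r => [|b s IH] r comp_s comp_r r_nonempty neg_short.
  by apply: (in_ideal_ext in_ideal0) => m; rewrite /linext /= big_cons big_seq1 !mul1r subrr.
have [b_neq0 comp_s'] := andP comp_s.
have comp_rb : is_comp (rcons r b) by rewrite -cats1 is_comp_cat comp_r /is_comp /= b_neq0.
have := IH (rcons r b) comp_s' comp_rb; rewrite -size_eq0 size_rcons addSnnS.
move=> /(_ isT neg_short); rewrite !cat_rcons.
have -> : (fun w => Mser R (rcons r b ++ w)) = fun w => Mser R (r ++ b :: w).
  by apply: functional_extensionality => w; rewrite cat_rcons.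
move=> id_shift.
have id_r : in_ideal (linext (fun w m => Mser R (r ++ None :: w) m + Mser R (r ++ w) m)
                             (qshuffle (b :: s) v)).
  apply: in_ideal_linext => p p_qsh; apply: neg_short => //.
    by rewrite lt0n size_eq0 r_nonempty /= addnS ltnS leq_addr.
  exact: (allP (is_comb_qshuffle comp_s comp_v) p p_qsh).
apply: (in_ideal_ext (in_idealD id_shift id_r)) => m.
by rewrite linext_qshuffle_opt_eps //=; ring.
Qed.

Lemma eps_negating_nonempty s : is_comp s -> s != [::] -> eps_negating s.
Proof.
have [n] := ubnP (size s); elim: n s => // n IH [//|a s] /ltnSE size_s comp_as _ v comp_v.
have [a_neq0 comp_s] := andP comp_as.
have comp_eps_v : is_comp (None :: v) by [].
have gen := in_ideal_mulM comp_as comp_eps_v erefl; rewrite -ser_qshuffle // in gen.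
have eps_part : in_ideal (linext (fun w => Mser R (None :: w)) (qshuffle (a :: s) v)).
  apply: in_ideal_linext => p p_qsh; apply: in_ideal_M => //.
  exact: (allP (is_comb_qshuffle comp_as comp_v) p p_qsh).
have head_part : in_ideal (linext (fun w => Mser R ([:: a] ++ w)) (qshuffle_opt_eps s v)).
  apply: (in_ideal_ext (in_idealB gen eps_part)) => m.
  by rewrite ser_linext linext_qshuffle_eps // addrK.
have neg_short t : is_comp t -> (0 < size t < size [:: a] + size s)%N -> eps_negating t.
  move=> comp_t /andP [t_pos t_small]; apply: IH => //; first exact: leq_trans size_s.
  by rewrite -size_eq0 -lt0n.
have comp_a : is_comp [:: a] by rewrite /is_comp /= a_neq0.
have shift := prefix_qshuffle_opt_eps comp_v comp_s comp_a isT neg_short.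
by apply: (in_ideal_ext (in_idealB head_part shift)) => m /=; ring.
Qed.

Lemma phiM_eps_insert s w m : s != [::] -> phiM (s ++ None :: w) m = - phiM (s ++ w) m.
Proof.
case: s => [//|a s] _; rewrite /phiM /=; case: (a == None); first by rewrite oppr0.
by rewrite /psiM /leps /bar /= !count_cat !filter_cat /= add1n !addnS exprS mulN1r mulNr.
Qed.

Lemma phiM_eps_free al m : None \notin al -> phiM al m = Mser R al m.
Proof.
move=> eps_notin; rewrite /phiM /psiM.
have -> : in_Ceps al = false.
  by case: al eps_notin => //= e al; rewrite inE negb_or eq_sym => /andP [/negbTE].
have -> : leps al = 0%N by apply/count_memPn.
have -> : bar al = al by apply/all_filterP/allP => e e_al; apply: contraNneq eps_notin => <-.
by rewrite expr0 mul1r.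
Qed.

Lemma Mser_sub_phiM_in_ideal al : is_comp al -> in_ideal (fun m => Mser R al m - phiM al m).
Proof.
have [n] := ubnP (size al); elim: n al => // n IH al /ltnSE size_al comp_al.
case eps_al: (in_Ceps al).
  by apply: (in_ideal_ext (in_ideal_M comp_al eps_al)) => m; rewrite /phiM eps_al subr0.
have [eps_in | eps_notin] := boolP (None \in al); last first.
  by apply: (in_ideal_ext in_ideal0) => m; rewrite phiM_eps_free // subrr.
case/splitPr: eps_in eps_al comp_al size_al => s w eps_sw.
have s_nonempty : s != [::] by case: s eps_sw.
rewrite is_comp_cat => /andP [comp_s /andP [_ comp_w]].
rewrite size_cat /= addnS => size_sw.
have comp_sw : is_comp (s ++ w) by rewrite is_comp_cat comp_s.
have := IH (s ++ w); rewrite size_cat => /(_ size_sw comp_sw) IH_sw.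
have neg := eps_negating_nonempty comp_s s_nonempty comp_w.
by apply: (in_ideal_ext (in_idealB neg IH_sw)) => m; rewrite phiM_eps_insert //; ring.
Qed.

Lemma ser_sub_phi_in_ideal c : is_comb c -> in_ideal (fun m => ser c m - ser (phi c) m).
Proof.
move=> comb_c; rewrite ser_phi.
have : in_ideal (linext (fun w m => Mser R w m - phiM w m) c).
  by apply: in_ideal_linext => p p_c; apply: Mser_sub_phiM_in_ideal; exact: (allP comb_c).
by move/in_ideal_ext; apply => m; rewrite linextD linextN.
Qed.

End Series.

Theorem corollary3p12 (R : comAlgType rat) (c : comb R) :
  is_comb c ->
  ((forall m, ser (phi c) m = 0) <->
   exists gs : seq (comb R * seq ntilde),
     all (fun q => is_comb q.1 && is_comp q.2 && in_Ceps q.2) gs /\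
     forall m, ser c m = \sum_(q <- gs) mulser (ser q.1) (Mser R q.2) m).
Proof.
move=> comb_c; split => [phi_c0 | [gs [gens_gs ser_c]]].
  have [gs [gens_gs ser_gs]] := ser_sub_phi_in_ideal comb_c.
  by exists gs; split => // m; rewrite -ser_gs phi_c0 subr0.
exact: phi_vanishes_on_ideal comb_c gens_gs ser_c.
Qed.
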